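(* Let $\mathbb A\in\mathcal K$ and let $S$ be a tolerance of $\mathbb A$ (a reflexive, symmetric, compatible binary relation). Suppose $d_0,d_1,\dots,d_k\in\mathbb A$ satisfy $(d_j,d_{j+1})\in S$ for all $j\in\{0,\dots,k-1\}$. If for some $i\in\{0,\dots,k\}$ there is $d'_i\in\mathbb A$ with $d_i\sqsubseteq d'_i$, then there are $d'_j\in\mathbb A$ for $j\in\{0,\dots,k\}\setminus\{i\}$ such that $d_j\sqsubseteq d'_j$ for all $j\in\{0,\dots,k\}$ and $(d'_j,d'_{j+1})\in S$ for all $j\in\{0,\dots,k-1\}$. Moreover, if $d_0,\dots,d_{i-1}$ are maximal elements of $\mathbb A$, then there are $d''_0,\dots,d''_k$ such that $d''_j=d_j$ for $j\in\{0,\dots,i-1\}$, $d_i\sqsubseteq d'_i\sqsubseteq d''_i$, $d_j\sqsubseteq d''_j$ for $j\in\{i+1,\dots,k\}$, and $(d''_j,d''_{j+1})\in S$ for all $j\in\{0,\dots,k-1\}$.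
   Context: All algebras are finite and idempotent. Edges: for elements $a,b$ of an algebra $\mathbb A$ let $\mathbb B=\mathrm{Sg}(a,b)$ (the generated subalgebra). The pair $ab$ is an edge if there is a maximal congruence $\theta$ of $\mathbb B$ such that either $\mathbb B/\theta$ is a set (unary type), or $\mathbb B/\theta$ is term equivalent to the full idempotent reduct of a module and some term operation $f$ induces on $\mathbb B/\theta$ the affine operation $x-y+z$ (affine type), or some term operation $f$ with $f/\theta$ a semilattice operation on $\{a/\theta,b/\theta\}$, or one with $f/\theta$ a majority operation on $\{a/\theta,b/\theta\}$. Semilattice type: the semilattice option holds for some $\theta$; majority type: not semilattice type and the majority option holds for some $\theta$; $\{a/\theta,b/\theta\}$ is a thick edge. $\mathbb A$ is smooth if for every edge $ab$ of semilattice or majority type with witness $\theta$, $a/\theta\cup b/\theta$ is a subalgebra. Standing assumption: $\mathcal K$ is a fixed finite class of similar smooth idempotent algebras, closed under subalgebras and homomorphic images, with no edges of unary type. Fixed binary term $\cdot$: semilattice operation on every thick semilattice edge of every algebra in $\mathcal K$, and for all $a,b$ either $a\cdot b=a$ or $(a,a\cdot b)$ is a thin semilattice edge. A thin semilattice edge is a pair $ab$ with $a\cdot b=b\cdot a=b$, written $a\le b$. An s-path is a sequence $a_0\le a_1\le\dots\le a_k$; $a\sqsubseteq b$ means there is an s-path from $a$ to $b$ in $\mathbb A$. $a$ is maximal if $a\sqsubseteq b$ implies $b\sqsubseteq a$. *)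

From mathcomp Require Import all_boot all_order all_algebra.
Set Implicit Arguments.
Unset Strict Implicit.
Unset Printing Implicit Defensive.
Import GRing.Theory.
Local Open Scope ring_scope.

Section UA.
Variables (F : Type) (ar : F -> nat).

Record algebra := Algebra {
  carrier :> finType;
  interp : forall f : F, {ffun 'I_(ar f) -> carrier} -> carrier }.
Arguments interp {a} f _.

Definition idempotent (A : algebra) : Prop :=
  forall (f : F) (x : A), interp f [ffun=> x] = x.

Inductive term : Type :=
| Var of nat
| App (f : F) of {ffun 'I_(ar f) -> term}.

Fixpoint teval (A : algebra) (v : nat -> A) (t : term) {struct t} : A :=
  match t with
  | Var i => v i
  | App f ts => interp f [ffun j => teval v (ts j)]
  end.

Definition val2 (A : algebra) (x y : A) : nat -> A :=
  fun i => if i == 0%N then x else y.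
Definition val3 (A : algebra) (x y z : A) : nat -> A :=
  fun i => if i == 0%N then x else if i == 1%N then y else z.

Definition bin (A : algebra) (t : term) (x y : A) : A := teval (val2 x y) t.
Definition tern (A : algebra) (t : term) (x y z : A) : A := teval (val3 x y z) t.

Section InAlgebra.
Variable A : algebra.

Definition subuniverse (P : A -> Prop) : Prop :=
  forall (f : F) (v : {ffun 'I_(ar f) -> A}), (forall j, P (v j)) -> P (interp f v).

Definition Sg2 (a b : A) : A -> Prop :=
  fun x => forall P, subuniverse P -> P a -> P b -> P x.

(* congruences of the subalgebra with universe B *)
Definition congruence (B : A -> Prop) (th : A -> A -> Prop) : Prop :=
  [/\ (forall x y, th x y -> B x /\ B y),
      (forall x, B x -> th x x),
      (forall x y, th x y -> th y x),
      (forall x y z, th x y -> th y z -> th x z) &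
      (forall (f : F) (v w : {ffun 'I_(ar f) -> A}),
          (forall j, th (v j) (w j)) -> th (interp f v) (interp f w))].

Definition max_congruence (B : A -> Prop) (th : A -> A -> Prop) : Prop :=
  [/\ congruence B th,
      (exists x y, [/\ B x, B y & ~ th x y]) &
      (forall eta, congruence B eta -> (forall x y, th x y -> eta x y) ->
          (forall x y, eta x y -> th x y) \/ (forall x y, B x -> B y -> eta x y))].

Definition valuation_in (B : A -> Prop) (v : nat -> A) := forall i, B (v i).

(* B/th is a set: every term operation is a projection *)
Definition quotient_is_set (B : A -> Prop) (th : A -> A -> Prop) : Prop :=
  forall t : term, exists i, forall v, valuation_in B v -> th (teval v t) (v i).

(* B/th is term equivalent to the full idempotent reduct of a module
   (phi identifies B/th with the module M), and the term p induces x - y + z *)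
Definition quotient_is_affine (B : A -> Prop) (th : A -> A -> Prop) : Prop :=
  exists (R : nzRingType) (M : lmodType R) (phi : A -> M),
  [/\ (forall x y, B x -> B y -> (phi x = phi y <-> th x y)),
      (forall m : M, exists2 x, B x & phi x = m),
      (forall t : term, exists n (r : 'I_n -> R), \sum_(i < n) r i = 1 /\
          forall v, valuation_in B v ->
            phi (teval v t) = \sum_(i < n) r i *: phi (v i)),
      (forall n (r : 'I_n -> R), \sum_(i < n) r i = 1 ->
          exists t : term, forall v, valuation_in B v ->
            phi (teval v t) = \sum_(i < n) r i *: phi (v i)) &
      (exists p : term, forall x y z, B x -> B y -> B z ->
          phi (tern p x y z) = phi x - phi y + phi z)].

Definition semilattice_on (th : A -> A -> Prop) (f : term) (a b : A) : Prop :=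
  th (bin f a b) (bin f b a) /\ (th (bin f a b) a \/ th (bin f a b) b).

Definition majority_on (th : A -> A -> Prop) (m : term) (a b : A) : Prop :=
  forall x y, (x = a \/ x = b) -> (y = a \/ y = b) ->
    [/\ th (tern m x x y) x, th (tern m x y x) x & th (tern m y x x) x].

Definition semilattice_option (a b : A) th : Prop :=
  exists f, semilattice_on th f a b.
Definition majority_option (a b : A) th : Prop :=
  exists m, majority_on th m a b.

Definition edge (a b : A) : Prop :=
  exists th, max_congruence (Sg2 a b) th /\
    [\/ quotient_is_set (Sg2 a b) th, quotient_is_affine (Sg2 a b) th,
        semilattice_option a b th | majority_option a b th].

Definition semilattice_type (a b : A) : Prop :=
  exists th, max_congruence (Sg2 a b) th /\ semilattice_option a b th.
Definition majority_type (a b : A) : Prop :=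
  ~ semilattice_type a b /\
  exists th, max_congruence (Sg2 a b) th /\ majority_option a b th.
Definition unary_type (a b : A) : Prop :=
  exists th, max_congruence (Sg2 a b) th /\ quotient_is_set (Sg2 a b) th.

Definition smooth : Prop :=
  forall a b th, max_congruence (Sg2 a b) th ->
    (semilattice_option a b th \/ (majority_type a b /\ majority_option a b th)) ->
    subuniverse (fun x => th x a \/ th x b).

Definition tolerance (S : A -> A -> Prop) : Prop :=
  [/\ (forall x, S x x), (forall x y, S x y -> S y x) &
      (forall (f : F) (v w : {ffun 'I_(ar f) -> A}),
          (forall j, S (v j) (w j)) -> S (interp f v) (interp f w))].

Definition thin_le (dot : term) (a b : A) : bool :=
  (bin dot a b == b) && (bin dot b a == b).
Definition sqle (dot : term) (a b : A) : bool := connect (thin_le dot) a b.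
Definition maximal (dot : term) (a : A) : Prop :=
  forall b, sqle dot a b -> sqle dot b a.

End InAlgebra.

Definition hom (A C : algebra) (h : A -> C) : Prop :=
  forall (f : F) (v : {ffun 'I_(ar f) -> A}),
    h (interp f v) = interp f [ffun j => h (v j)].
Definition iso (A C : algebra) : Prop :=
  exists h : A -> C, hom h /\ bijective h.

Definition standing_class (K : algebra -> Prop) : Prop :=
  [/\ (exists n (L : 'I_n -> algebra), forall A, K A -> exists j, iso A (L j)),
      (forall A, K A -> idempotent A /\ smooth A),
      (* closed under subalgebras (= algebras embeddable in a member) *)
      (forall (A C : algebra) (h : C -> A), K A -> hom h -> injective h -> K C),
      (forall (A C : algebra) (h : A -> C), K A -> hom h -> (forall y, exists x, h x = y) -> K C) &
      (forall A, K A -> forall a b : A, ~ unary_type a b)].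

Definition good_dot (K : algebra -> Prop) (dot : term) : Prop :=
  (forall A, K A -> forall (a b : A) th, max_congruence (Sg2 a b) th ->
      semilattice_option a b th -> semilattice_on th dot a b) /\
  (forall A, K A -> forall a b : A,
      bin dot a b = a \/ thin_le dot a (bin dot a b)).

End UA.

From mathcomp Require Import all_boot.
From mathcomp Require Import zify.

Set Implicit Arguments.
Unset Strict Implicit.

(* The argument separates into an order-theoretic part and an algebraic part.
   The order-theoretic part works for an arbitrary preorder [le] and relation
   [R] with the "lifting property": whenever [le a a'] and [R a c] there is
   [c'] with [le c c'] and [R a' c'].  For such [le] and [R], raising one
   element of an [R]-chain can be propagated step by step to the right
   ([lift_chain_right]) and, when [R] is symmetric, to the left
   ([lift_chain_left]); combining both gives the first claim
   ([lift_chain_at]).  For the second claim, a prefix of [le]-maximal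
   elements is restored one index at a time, each time propagating the
   change to the right ([restore_maximal_prefix]).

   The algebraic part shows that [sqle dot] and a tolerance [S] of an
   algebra in the class have the lifting property: a thin edge [a <= b] and
   [S a c] give [S b (c . b)] with [c <= c . b] or [c = c . b]
   ([thin_edge_lift]), since term operations preserve tolerances
   ([teval_compatible]); induction along the s-path does the rest. *)

Section ChainLifting.
Variables (T : Type) (le R : T -> T -> Prop).
Hypothesis le_refl : forall a, le a a.
Hypothesis le_trans : forall a b c, le a b -> le b c -> le a c.
Hypothesis lift : forall a a' c, le a a' -> R a c -> exists c', le c c' /\ R a' c'.

Definition maximal_for (a : T) : Prop := forall b, le a b -> le b a.

Lemma lift_chain0 (n : nat) (c : nat -> T) (x : T) :
  (forall j, j < n -> R (c j) (c j.+1)) -> le (c 0) x ->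
  exists c' : nat -> T, [/\ c' 0 = x,
    (forall j, 0 < j -> le (c j) (c' j)) &
    (forall j, j < n -> R (c' j) (c' j.+1))].
Proof.
elim: n c x => [|n IH] c x Hc Hx.
  by exists (fun j => if j is 0 then x else c j); split=> // -[|j].
have [y [Hy Rxy]] := lift Hx (Hc 0 isT).
have [c1 [E0 Ele Ech]] := IH (fun j => c j.+1) y (fun j => Hc j.+1) Hy.
exists (fun j => if j is j'.+1 then c1 j' else x); split=> //.
- by case=> [|[|j]] // _; [rewrite E0 | exact: Ele].
- by case=> [|j] Hj; [rewrite E0 | exact: Ech].
Qed.

Lemma lift_chain_right (m k : nat) (c : nat -> T) (x : T) :
  (forall j, m <= j < k -> R (c j) (c j.+1)) -> le (c m) x ->
  exists c' : nat -> T, [/\ (forall j, j < m -> c' j = c j), c' m = x,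
    (forall j, m < j -> le (c j) (c' j)) &
    (forall j, m <= j < k -> R (c' j) (c' j.+1))].
Proof.
move=> Hc Hx.
have Hshift : forall j, j < k - m -> R (c (m + j)) (c (m + j.+1)).
  by move=> j Hj; rewrite addnS; apply: Hc; lia.
have Hx0 : le (c (m + 0)) x by rewrite addn0.
have [c0 [E0 Ele Ech]] := @lift_chain0 (k - m) (fun j => c (m + j)) x Hshift Hx0.
exists (fun j => if j < m then c j else c0 (j - m)); split.
- by move=> j ->.
- by rewrite ltnn subnn.
- move=> j Hj; rewrite ifN; last lia.
  by have := Ele (j - m); rewrite subnKC; [apply; lia | lia].
- move=> j Hj; rewrite !ifN; try lia.
  by rewrite subSn; [apply: Ech; lia | lia].
Qed.

Hypothesis R_sym : forall a b, R a b -> R b a.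

Lemma lift_chain_left (m : nat) (c : nat -> T) (x : T) :
  (forall j, j < m -> R (c j) (c j.+1)) -> le (c m) x ->
  exists c' : nat -> T, [/\ (forall j, m < j -> c' j = c j), c' m = x,
    (forall j, j < m -> le (c j) (c' j)) &
    (forall j, j < m -> R (c' j) (c' j.+1))].
Proof.
move=> Hc Hx.
have Hrev : forall j, j < m -> R (c (m - j)) (c (m - j.+1)).
  move=> j Hj; have Em : (m - j.+1).+1 = m - j by lia.
  by apply: R_sym; rewrite -Em; apply: Hc; lia.
have Hx0 : le (c (m - 0)) x by rewrite subn0.
have [c0 [E0 Ele Ech]] := @lift_chain0 m (fun j => c (m - j)) x Hrev Hx0.
exists (fun j => if j <= m then c0 (m - j) else c j); split.
- by move=> j Hj; rewrite ifN //; lia.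
- by rewrite leqnn subnn.
- move=> j Hj; rewrite ifT; last lia.
  by have := Ele (m - j); rewrite subKn; [apply; lia | lia].
- move=> j Hj; rewrite !ifT; try lia.
  have Em : (m - j.+1).+1 = m - j by lia.
  by apply: R_sym; rewrite -Em; apply: Ech; lia.
Qed.

Lemma lift_chain_at (k i : nat) (c : nat -> T) (x : T) :
  i <= k -> (forall j, j < k -> R (c j) (c j.+1)) -> le (c i) x ->
  exists c' : nat -> T, [/\ c' i = x,
    (forall j, le (c j) (c' j)) &
    (forall j, j < k -> R (c' j) (c' j.+1))].
Proof.
move=> Hik Hc Hx.
have Hc_head : forall j, j < i -> R (c j) (c j.+1).
  by move=> j Hj; apply: Hc; lia.
have Hc_tail : forall j, i <= j < k -> R (c j) (c j.+1).
  by move=> j /andP [_ Hj]; apply: Hc.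
have [l [_ L2 L3 L4]] := lift_chain_left Hc_head Hx.
have [r [_ R2 R3 R4]] := lift_chain_right Hc_tail Hx.
(* Splice the two lifts at [i], where both take the value [x]. *)
exists (fun j => if j < i then l j else r j); split=> [|j|j Hj].
- by rewrite ltnn.
- case: (ltngtP j i) => Hj; [exact: L3 | exact: R3 | by rewrite Hj R2].
- case: (ltnP j.+1 i) => Hj1 /=; first by rewrite ifT; [apply: L4 |]; lia.
  case: (ltnP j i) => Hji /=; last by apply: R4; lia.
  have Ei : j.+1 = i by lia.
  by rewrite Ei R2 -L2 -Ei; exact: L4.
Qed.

Lemma restore_maximal_prefix (k i : nat) (d c : nat -> T) :
  i <= k -> (forall j, j < i -> R (d j) (d j.+1)) ->
  (forall j, j < k -> R (c j) (c j.+1)) -> (forall j, le (d j) (c j)) ->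
  (forall j, j < i -> maximal_for (d j)) ->
  exists c' : nat -> T, [/\ (forall j, j < i -> c' j = d j), le (c i) (c' i),
    (forall j, le (d j) (c' j)) &
    (forall j, j < k -> R (c' j) (c' j.+1))].
Proof.
move=> Hik Hd Hc Hdc Hmax.
suff: forall m, m <= i -> exists c' : nat -> T,
    [/\ (forall j, j < m -> c' j = d j), le (c i) (c' i),
        (forall j, le (d j) (c' j)) & (forall j, j < k -> R (c' j) (c' j.+1))].
  by apply.
elim=> [|m IH] Hm; first by exists c; split.
have [c1 [C1 C2 C3 C4]] := IH (ltnW Hm).
(* [c1 m] lies above the maximal [d m], hence below it. *)
have Hback : le (c1 m) (d m) := Hmax m Hm _ (C3 m).
have C4_tail : forall j, m <= j < k -> R (c1 j) (c1 j.+1).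
  by move=> j /andP [_ Hj]; apply: C4.
have [c2 [E1 E2 E3 E4]] := lift_chain_right C4_tail Hback.
have Hpref : forall j, j <= m -> c2 j = d j.
  by move=> j; rewrite leq_eqVlt => /orP [/eqP -> // | Hj]; rewrite E1 ?C1.
exists c2; split.
- by move=> j Hj; apply: Hpref.
- exact: le_trans C2 (E3 i Hm).
- move=> j; case: (leqP j m) => Hj; first by rewrite Hpref.
  exact: le_trans (C3 j) (E3 j Hj).
- move=> j Hj; case: (leqP m j) => Hmj; first by apply: E4; rewrite Hmj.
  by rewrite !Hpref //; [apply: Hd; lia | lia].
Qed.

End ChainLifting.

Section ToleranceLifting.
Variables (F : Type) (ar : F -> nat) (A : algebra ar) (S : A -> A -> Prop).
Hypothesis HS : tolerance S.

Lemma teval_compatible (v w : nat -> A) :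
  (forall n, S (v n) (w n)) -> forall t : term ar, S (teval v t) (teval w t).
Proof.
case: HS => _ _ Scompat Hvw; fix IH 1 => -[n|f ts] /=; first exact: Hvw.
by apply: Scompat => j; rewrite !ffunE.
Qed.

Variable dot : term ar.
Hypothesis dot_step : forall a b : A, bin dot a b = a \/ thin_le dot a (bin dot a b).

(* Lifting across one thin semilattice edge [a <= b]: apply [dot _ b]. *)
Lemma thin_edge_lift (a b c : A) : thin_le dot a b -> S a c ->
  S b (bin dot c b) /\ sqle dot c (bin dot c b).
Proof.
move=> /andP [/eqP dot_ab _] Sac; split.
  rewrite -[X in S X _]dot_ab; apply: teval_compatible => -[|n] //=.
  by case: HS.
by case: (dot_step c b) => [-> | Hcb]; [exact: connect0 | exact: connect1].
Qed.

Lemma sqle_lift (a a' c : A) : sqle dot a a' -> S a c ->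
  exists c', sqle dot c c' /\ S a' c'.
Proof.
move/connectP => [p Hp ->]; elim: p a c Hp => [|x p IH] a c /= Hp Sac.
  by exists c; split=> //; exact: connect0.
case/andP: Hp => Hax Hp.
have [Sx Hc] := thin_edge_lift Hax Sac.
have [c' [Hc' S']] := IH _ _ Hp Sx.
by exists c'; split=> //; exact: connect_trans Hc Hc'.
Qed.

End ToleranceLifting.

Theorem lemma21 (F : Type) (ar : F -> nat) (K : algebra ar -> Prop)
  (dot : term ar) (HK : standing_class K) (Hdot : good_dot K dot)
  (A : algebra ar) (HA : K A) (S : A -> A -> Prop) (HS : tolerance S)
  (k : nat) (d : nat -> A) (Hd : forall j, j < k -> S (d j) (d j.+1))
  (i : nat) (Hi : i <= k) (e : A) (He : sqle dot (d i) e) :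
  (exists d' : nat -> A,
     [/\ d' i = e,
         (forall j, j <= k -> sqle dot (d j) (d' j)) &
         (forall j, j < k -> S (d' j) (d' j.+1))]) /\
  ((forall j, j < i -> maximal dot (d j)) ->
   exists d'' : nat -> A,
     [/\ (forall j, j < i -> d'' j = d j),
         sqle dot e (d'' i),
         (forall j, i < j <= k -> sqle dot (d j) (d'' j)) &
         (forall j, j < k -> S (d'' j) (d'' j.+1))]).
Proof.
pose le (a b : A) : Prop := sqle dot a b.
have le_refl : forall a, le a a by move=> a; exact: connect0.
have le_trans : forall a b c, le a b -> le b c -> le a c.
  by move=> a b c; exact: connect_trans.
have lift := sqle_lift HS (Hdot.2 A HA).
have S_sym : forall a b, S a b -> S b a by case: HS.
have [d' [D1 D2 D3]] := lift_chain_at le_refl lift S_sym Hi Hd He.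
split; first by exists d'; split=> // j _; exact: D2.
move=> Hmax.
have Hd_head : forall j, j < i -> S (d j) (d j.+1).
  by move=> j Hj; apply: Hd; lia.
have [d'' [E1 E2 E3 E4]] :=
  restore_maximal_prefix le_refl le_trans lift Hi Hd_head D3 D2 Hmax.
by exists d''; split=> // [|j _]; [rewrite -D1 | exact: E3].
Qed.
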